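(* Let $\varepsilon>0$, $\Omega\subset\mathbb{R}^2$ bounded open, $u\in\mathcal{SF}_\varepsilon(\Omega)$ and $R\in\mathcal{R}_\varepsilon(u)$. Then $u(\mathcal{L}_\varepsilon(R))$ contains at most four points.
   Context: $\mathcal{L}=\{ae_1+b\hat e_2:a,b\in\mathbb{Z}\}$ with $e_1=(1,0)$, $\hat e_2=\frac12(1,\sqrt3)$, $\mathcal{L}_\varepsilon=\varepsilon\mathcal{L}$, $\mathcal{L}_\varepsilon(R)=\mathcal{L}_\varepsilon\cap R$; $\mathcal{T}_\varepsilon$ is the set of closed triangles with vertices in $\mathcal{L}_\varepsilon$ pairwise at distance $\varepsilon$; $\mathcal{E}_\varepsilon$ the set of segments $[i,j]$, $i,j\in\mathcal{L}_\varepsilon$, $|i-j|=\varepsilon$. $n=(0,0,1)$; $\mathcal{SF}_\varepsilon(\Omega)$ is the set of $u:\mathcal{L}_\varepsilon\to\mathbb{S}^2$ with $u=n$ on $\mathcal{L}_\varepsilon\setminus\Omega$. $\mathcal{N}_\varepsilon(u)=\{[i,j]\in\mathcal{E}_\varepsilon:u(i)=-u(j)\}$. Two triangles of $\mathcal{T}_\varepsilon$ are neighbours if their intersection is an edge in $\mathcal{N}_\varepsilon(u)$, and connected if joined by a finite chain of consecutive neighbours. $\mathcal{R}_\varepsilon(u)$ is the set of admissible interpolation regions: unions of pairwise connected triangles of $\mathcal{T}_\varepsilon$ that are maximal with respect to inclusion. *)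

From Stdlib Require Import Reals Relations.
Open Scope R_scope.

Definition pt2 := (R * R)%type.
Definition pt3 := (R * R * R)%type.

Definition dist2 (p q : pt2) : R :=
  sqrt ((fst p - fst q)^2 + (snd p - snd q)^2).

(* L_eps = eps * { a e1 + b e2hat : a b in Z }, e1=(1,0), e2hat=(1/2, sqrt3/2) *)
Definition in_lattice (eps : R) (p : pt2) : Prop :=
  exists a b : Z,
    p = (eps * (IZR a + IZR b / 2), eps * (IZR b * sqrt 3 / 2)).

Definition on_sphere (v : pt3) : Prop :=
  let '(x, y, z) := v in x^2 + y^2 + z^2 = 1.

Definition north : pt3 := (0, 0, 1).
Definition opp3 (v : pt3) : pt3 := let '(x, y, z) := v in (-x, -y, -z).

Definition open2 (O : pt2 -> Prop) : Prop :=
  forall x, O x -> exists r, 0 < r /\ forall y, dist2 x y < r -> O y.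
Definition bounded2 (O : pt2 -> Prop) : Prop :=
  exists M, forall x, O x -> dist2 (0,0) x <= M.

(* u in SF_eps(Omega): u : L_eps -> S^2, u = n on L_eps \ Omega.
   u is given as a function on R^2; only its values on L_eps matter. *)
Definition SF (eps : R) (Omega : pt2 -> Prop) (u : pt2 -> pt3) : Prop :=
  (forall p, in_lattice eps p -> on_sphere (u p)) /\
  (forall p, in_lattice eps p -> ~ Omega p -> u p = north).

Definition seg (i j : pt2) (x : pt2) : Prop :=
  exists t, 0 <= t <= 1 /\
    x = ((1 - t) * fst i + t * fst j, (1 - t) * snd i + t * snd j).

Definition tri (i j k : pt2) (x : pt2) : Prop :=
  exists a b c, 0 <= a /\ 0 <= b /\ 0 <= c /\ a + b + c = 1 /\
    x = (a * fst i + b * fst j + c * fst k, a * snd i + b * snd j + c * snd k).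

Definition seteq (A B : pt2 -> Prop) : Prop := forall x, A x <-> B x.

Definition is_triangle (eps : R) (T : pt2 -> Prop) : Prop :=
  exists i j k, in_lattice eps i /\ in_lattice eps j /\ in_lattice eps k /\
    dist2 i j = eps /\ dist2 j k = eps /\ dist2 i k = eps /\
    seteq T (tri i j k).

Definition antipodal_edge (eps : R) (u : pt2 -> pt3) (i j : pt2) : Prop :=
  in_lattice eps i /\ in_lattice eps j /\ dist2 i j = eps /\ u i = opp3 (u j).

Definition neighbours (eps : R) (u : pt2 -> pt3) (T1 T2 : pt2 -> Prop) : Prop :=
  is_triangle eps T1 /\ is_triangle eps T2 /\
  exists i j, antipodal_edge eps u i j /\
    seteq (fun x => T1 x /\ T2 x) (seg i j).

Definition tri_connected (eps : R) (u : pt2 -> pt3) : relation (pt2 -> Prop) :=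
  clos_refl_trans _ (neighbours eps u).

Definition conn_union (eps : R) (u : pt2 -> pt3) (S : pt2 -> Prop) : Prop :=
  exists F : (pt2 -> Prop) -> Prop,
    (forall T, F T -> is_triangle eps T) /\
    (forall T1 T2, F T1 -> F T2 -> tri_connected eps u T1 T2) /\
    seteq S (fun x => exists T, F T /\ T x).

Definition admissible_region (eps : R) (u : pt2 -> pt3) (Rg : pt2 -> Prop) : Prop :=
  conn_union eps u Rg /\
  forall S, conn_union eps u S -> (forall x, Rg x -> S x) -> forall x, S x -> Rg x.

(* Each triangle of [T_eps] contains exactly three lattice points, its vertices, and two
   triangles are neighbours only across an antipodal side, the neighbour across a side being
   unique.  Since [v <> -v] on the sphere, at most two sides of a triangle are antipodal, so the
   neighbour graph has degree at most two.  If some triangle of the region has a neighbour, the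
   two antipodal values [a], [-a] of the common side propagate along chains of neighbours to
   every triangle of the region.  A triangle whose third value [b] differs from [a] and [-a] then
   has a single antipodal side and is a leaf of the neighbour graph; a connected graph of degree
   at most two has at most two leaves, so at most two such values [b] occur.  If no triangle has
   a neighbour, the region is a single triangle. *)

From Stdlib Require Import Reals Relations Lra Lia Psatz Classical FunctionalExtensionality
  PropExtensionality.

Lemma cover_by_two {A : Type} (d : A) (P : A -> Prop) :
  (forall x y z, P x -> P y -> P z -> x = y \/ x = z \/ y = z) ->
  exists b1 b2, forall x, P x -> x = b1 \/ x = b2.
Proof.
  intros HP.
  destruct (classic (exists b1, P b1)) as [[b1 P1]|none].
  - destruct (classic (exists b2, P b2 /\ b2 <> b1)) as [[b2 [P2 D21]]|only1].
    + exists b1, b2. intros x Px.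
      destruct (HP b1 b2 x P1 P2 Px) as [E|[E|E]]; [congruence|auto|auto].
    + exists b1, b1. intros x Px. left. apply NNPP. intro Dx. apply only1. eauto.
  - exists d, d. intros x Px. exfalso. eauto.
Qed.

Lemma triple_perm {A : Type} (i j k p q r : A) : p <> q -> q <> r -> p <> r ->
  (p = i \/ p = j \/ p = k) -> (q = i \/ q = j \/ q = k) -> (r = i \/ r = j \/ r = k) ->
  (i = p \/ i = q \/ i = r) /\ (j = p \/ j = q \/ j = r) /\ (k = p \/ k = q \/ k = r).
Proof.
  intros Dpq Dqr Dpr Hp Hq Hr.
  destruct Hp as [->|[->| ->]], Hq as [->|[->| ->]], Hr as [->|[->| ->]];
    try congruence; tauto.
Qed.

Lemma two_pairs_of_three_meet {A : Type} (p q x y t1 t2 t3 : A) :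
  (p = t1 \/ p = t2 \/ p = t3) -> (q = t1 \/ q = t2 \/ q = t3) ->
  (x = t1 \/ x = t2 \/ x = t3) -> (y = t1 \/ y = t2 \/ y = t3) ->
  p <> q -> x <> y -> x = p \/ x = q \/ y = p \/ y = q.
Proof.
  intros Hp Hq Hx Hy Dpq Dxy.
  destruct Hp as [->|[->| ->]], Hq as [->|[->| ->]], Hx as [->|[->| ->]], Hy as [->|[->| ->]];
    tauto.
Qed.

Section DegreeTwoGraph.
Local Open Scope nat_scope.

Variables (V : Type) (N : V -> V -> Prop).

Definition leaf (x : V) : Prop := forall y z, N x y -> N x z -> y = z.

Definition walk (f : nat -> V) (n : nat) : Prop := forall k, k < n -> N (f k) (f (S k)).

Definition nonbacktracking (f : nat -> V) (n : nat) : Prop :=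
  forall k, k + 2 <= n -> f (k + 2) <> f k.

Lemma nonbacktracking_walk_of_clos x y : clos_refl_trans V N x y ->
  exists f n, f 0 = x /\ f n = y /\ walk f n /\ nonbacktracking f n.
Proof.
  intros Hxy. apply clos_rt_rt1n in Hxy.
  induction Hxy as [x | x y z Nxy _ (g & m & g0 & gm & gw & gnb)].
  - exists (fun _ => x), 0. repeat split; intros k Hk; lia.
  - destruct (classic (0 < m /\ g 1 = x)) as [[Hm g1]|Hback].
    + exists (fun k => g (S k)), (m - 1). repeat split.
      * exact g1.
      * now replace (S (m - 1)) with m by lia.
      * intros k Hk. apply gw. lia.
      * intros k Hk. apply (gnb (S k)). lia.
    + exists (fun k => match k with 0 => x | S k => g k end), (S m). repeat split.
      * exact gm.
      * intros [|k] Hk; [now rewrite g0 | apply gw; lia].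
      * intros [|k] Hk; simpl.
        -- intro E. apply Hback. split; [lia | exact E].
        -- apply gnb. lia.
Qed.

Hypothesis N_sym : forall x y, N x y -> N y x.
Hypothesis N_deg2 : forall x y z w, N x y -> N x z -> N x w -> y = z \/ y = w \/ z = w.

(* Degree at most two forces a non-backtracking walk to continue the only way it can. *)
Lemma nonbacktracking_walks_agree l f n g m : leaf l -> f 0 = l -> g 0 = l ->
  walk f n -> walk g m -> nonbacktracking f n -> nonbacktracking g m ->
  forall k, S k <= n -> S k <= m -> f k = g k /\ f (S k) = g (S k).
Proof.
  intros Hl f0 g0 fw gw fnb gnb k. induction k as [|k IH]; intros Hn Hm.
  - split; [congruence|]. apply Hl; [rewrite <- f0; apply fw | rewrite <- g0; apply gw]; lia.
  - destruct IH as [Ek ESk]; [lia | lia |]. split; [exact ESk|].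
    assert (Nback : N (f (S k)) (f k)) by (apply N_sym, fw; lia).
    assert (Nf : N (f (S k)) (f (S (S k)))) by (apply fw; lia).
    assert (Ng : N (f (S k)) (g (S (S k)))) by (rewrite ESk; apply gw; lia).
    destruct (N_deg2 _ _ _ _ Nback Nf Ng) as [E|[E|E]]; [| |exact E]; exfalso.
    + apply (fnb k); [lia | now rewrite Nat.add_comm].
    + apply (gnb k); [lia | rewrite Nat.add_comm; simpl; congruence].
Qed.

Lemma leaf_not_inner f n j : walk f n -> nonbacktracking f n -> S j < n -> ~ leaf (f (S j)).
Proof.
  intros fw fnb Hj Hl. apply (fnb j); [lia|].
  rewrite Nat.add_comm. symmetry. apply Hl; [apply N_sym, fw | apply fw]; lia.
Qed.

Lemma nonbacktracking_walks_end_at_leaf l f n g m : leaf l -> f 0 = l -> g 0 = l ->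
  walk f n -> walk g m -> nonbacktracking f n -> nonbacktracking g m ->
  0 < n <= m -> leaf (f n) -> f n = g m.
Proof.
  intros Hl f0 g0 fw gw fnb gnb Hnm Hend.
  destruct n as [|n]; [lia|].
  destruct (nonbacktracking_walks_agree l f (S n) g m Hl f0 g0 fw gw fnb gnb n) as [_ E];
    [lia | lia |].
  destruct (Nat.eq_dec (S n) m) as [<-|Hne]; [exact E|].
  exfalso. apply (leaf_not_inner g m n gw gnb); [lia | now rewrite <- E].
Qed.

Lemma no_three_connected_leaves l1 l2 l3 : leaf l1 -> leaf l2 -> leaf l3 ->
  l1 <> l2 -> l1 <> l3 -> l2 <> l3 ->
  clos_refl_trans V N l1 l2 -> clos_refl_trans V N l1 l3 -> False.
Proof.
  intros L1 L2 L3 D12 D13 D23 C12 C13.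
  destruct (nonbacktracking_walk_of_clos _ _ C12) as (f & n & f0 & fn & fw & fnb).
  destruct (nonbacktracking_walk_of_clos _ _ C13) as (g & m & g0 & gm & gw & gnb).
  destruct n as [|n]; [congruence|]. destruct m as [|m]; [congruence|].
  destruct (Nat.le_ge_cases (S n) (S m)) as [Hnm|Hmn].
  - apply D23. rewrite <- fn, <- gm.
    apply (nonbacktracking_walks_end_at_leaf l1); try rewrite fn; auto; lia.
  - apply D23. rewrite <- fn, <- gm. symmetry.
    apply (nonbacktracking_walks_end_at_leaf l1); try rewrite gm; auto; lia.
Qed.

End DegreeTwoGraph.

Open Scope R_scope.

Definition sqdist (p q : pt2) : R := (fst p - fst q)^2 + (snd p - snd q)^2.

Lemma sqdist_ge0 p q : 0 <= sqdist p q.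
Proof.
  unfold sqdist. pose proof (pow2_ge_0 (fst p - fst q)). pose proof (pow2_ge_0 (snd p - snd q)).
  lra.
Qed.

Lemma sqdist_sym p q : sqdist p q = sqdist q p.
Proof. unfold sqdist. ring. Qed.

Lemma sqdist_of_dist2 p q e : dist2 p q = e -> sqdist p q = e^2.
Proof. intros <-. apply eq_sym, pow2_sqrt, sqdist_ge0. Qed.

(* With integer coordinates [m, n] of [p - q], [sqdist p q = eps^2 (m^2 + m n + n^2)]. *)
Lemma sqdist_lattice_ge eps p q : in_lattice eps p -> in_lattice eps q -> p <> q ->
  eps^2 <= sqdist p q.
Proof.
  intros [a [b ->]] [c [d ->]] Hne.
  assert (Hform : (1 <= (a - c) * (a - c) + (a - c) * (b - d) + (b - d) * (b - d))%Z).
  { assert (Hxy : (a - c <> 0 \/ b - d <> 0)%Z).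
    { destruct (Z.eq_dec a c), (Z.eq_dec b d); [subst; contradiction | lia ..]. }
    generalize (a - c)%Z (b - d)%Z Hxy. intros x y [Hx|Hy]; nia. }
  apply IZR_le in Hform. rewrite !plus_IZR, !mult_IZR, !minus_IZR in Hform.
  assert (H3 : sqrt 3 * sqrt 3 = 3) by (apply sqrt_sqrt; lra).
  set (m := IZR a - IZR c) in Hform. set (n := IZR b - IZR d) in Hform.
  replace (sqdist _ _) with (eps^2 * (m * m + m * n + n * n)
    + eps^2 * n^2 / 4 * (sqrt 3 * sqrt 3 - 3)) by (unfold sqdist, m, n; simpl; field).
  rewrite H3. nra.
Qed.

Lemma seg_start i j : seg i j i.
Proof. exists 0. split; [lra|]. destruct i; simpl; f_equal; ring. Qed.

Lemma seg_end i j : seg i j j.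
Proof. exists 1. split; [lra|]. destruct j; simpl; f_equal; ring. Qed.

Lemma seg_sym i j x : seg i j x -> seg j i x.
Proof. intros [t [Ht ->]]. exists (1 - t). split; [lra|]. f_equal; ring. Qed.

Lemma tri_of_vertex i j k z : z = i \/ z = j \/ z = k -> tri i j k z.
Proof.
  destruct i, j, k. intros [->|[->| ->]]; [exists 1, 0, 0 | exists 0, 1, 0 | exists 0, 0, 1];
    (repeat split; try lra); simpl; f_equal; ring.
Qed.

Lemma tri_convex p q r x1 x2 x3 x :
  tri p q r x1 -> tri p q r x2 -> tri p q r x3 -> tri x1 x2 x3 x -> tri p q r x.
Proof.
  intros (a1 & b1 & c1 & ? & ? & ? & S1 & ->) (a2 & b2 & c2 & ? & ? & ? & S2 & ->)
         (a3 & b3 & c3 & ? & ? & ? & S3 & ->) (a & b & c & ? & ? & ? & S & ->).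
  exists (a * a1 + b * a2 + c * a3), (a * b1 + b * b2 + c * b3), (a * c1 + b * c2 + c * c3).
  repeat split; try nra. simpl. f_equal; ring.
Qed.

Lemma tri_sub i j k p q r x : (i = p \/ i = q \/ i = r) -> (j = p \/ j = q \/ j = r) ->
  (k = p \/ k = q \/ k = r) -> tri i j k x -> tri p q r x.
Proof. intros Hi Hj Hk. apply tri_convex; apply tri_of_vertex; assumption. Qed.

Lemma seg_apex_absurd e p q r : 0 < e -> sqdist p q = e ->
  sqdist p r = e -> sqdist q r = e -> ~ seg p q r.
Proof.
  intros He Dpq Dpr Dqr [t [_ Er]].
  assert (Ep : sqdist p r = t^2 * sqdist p q) by (rewrite Er; unfold sqdist; simpl; ring).
  assert (Eq : sqdist q r = (1 - t)^2 * sqdist p q) by (rewrite Er; unfold sqdist; simpl; ring).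
  rewrite Dpr, Dqr, Dpq in *. nra.
Qed.

Definition cross (p q r : pt2) : R :=
  (fst r - fst p) * (snd q - snd p) - (snd r - snd p) * (fst q - fst p).

Lemma apex_cross_sq e p q r : sqdist p q = e -> sqdist p r = e -> sqdist q r = e ->
  (cross p q r)^2 = 3 / 4 * e^2.
Proof.
  destruct p as [p1 p2], q as [q1 q2], r as [r1 r2]. unfold sqdist, cross; cbn [fst snd].
  intros Dpq Dpr Dqr.
  assert (Dot : (r1 - p1) * (q1 - p1) + (r2 - p2) * (q2 - p2) = e / 2) by nra.
  replace (((r1 - p1) * (q2 - p2) - (r2 - p2) * (q1 - p1)) ^ 2) with
    (((r1 - p1)^2 + (r2 - p2)^2) * ((p1 - q1)^2 + (p2 - q2)^2)
     - ((r1 - p1) * (q1 - p1) + (r2 - p2) * (q2 - p2))^2) by ring.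
  rewrite Dot, Dpq. replace ((r1 - p1)^2 + (r2 - p2)^2) with e by (rewrite <- Dpr; ring). field.
Qed.

Lemma apex_eq_of_cross e p q r r' : 0 < e -> sqdist p q = e ->
  sqdist p r = e -> sqdist q r = e -> sqdist p r' = e -> sqdist q r' = e ->
  cross p q r = cross p q r' -> r = r'.
Proof.
  destruct p as [p1 p2], q as [q1 q2], r as [r1 r2], r' as [s1 s2].
  unfold sqdist, cross; cbn [fst snd]. intros He Dpq Dpr Dqr Dps Dqs Ecross.
  assert (Edot : (r1 - s1) * (q1 - p1) + (r2 - s2) * (q2 - p2) = 0) by nra.
  assert (Hnorm : ((r1 - s1)^2 + (r2 - s2)^2) * e = 0).
  { rewrite <- Dpq.
    replace (((r1 - s1)^2 + (r2 - s2)^2) * ((p1 - q1)^2 + (p2 - q2)^2)) with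
      (((r1 - s1) * (q1 - p1) + (r2 - s2) * (q2 - p2))^2
       + (((r1 - p1) * (q2 - p2) - (r2 - p2) * (q1 - p1))
          - ((s1 - p1) * (q2 - p2) - (s2 - p2) * (q1 - p1)))^2) by ring.
    rewrite Edot, Ecross. ring. }
  apply Rmult_integral in Hnorm as [Hnorm|]; [|lra].
  pose proof (pow2_ge_0 (r1 - s1)); pose proof (pow2_ge_0 (r2 - s2)).
  f_equal; apply Rminus_diag_uniq, Rsqr_0_uniq; unfold Rsqr; lra.
Qed.

Lemma apexes_at_most_two e p q r1 r2 r3 : 0 < e -> sqdist p q = e ->
  sqdist p r1 = e -> sqdist q r1 = e -> sqdist p r2 = e -> sqdist q r2 = e ->
  sqdist p r3 = e -> sqdist q r3 = e -> r1 = r2 \/ r1 = r3 \/ r2 = r3.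
Proof.
  intros He Dpq D1 D1' D2 D2' D3 D3'.
  pose proof (apex_cross_sq e p q r1 Dpq D1 D1') as C1.
  pose proof (apex_cross_sq e p q r2 Dpq D2 D2') as C2.
  pose proof (apex_cross_sq e p q r3 Dpq D3 D3') as C3.
  assert (Sign : forall x y, x^2 = 3 / 4 * e^2 -> y^2 = 3 / 4 * e^2 -> x = y \/ x = - y).
  { intros x y Hx Hy. assert (Hxy : (x - y) * (x + y) = 0) by nra.
    destruct (Rmult_integral _ _ Hxy); [left | right]; lra. }
  destruct (Sign _ _ C1 C2) as [E12|E12]; [left; apply (apex_eq_of_cross e p q); auto|].
  destruct (Sign _ _ C1 C3) as [E13|E13]; [right; left; apply (apex_eq_of_cross e p q); auto|].
  right; right. apply (apex_eq_of_cross e p q); auto. lra.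
Qed.

Definition has_vertices (eps : R) (T : pt2 -> Prop) (i j k : pt2) : Prop :=
  in_lattice eps i /\ in_lattice eps j /\ in_lattice eps k /\
  sqdist i j = eps^2 /\ sqdist j k = eps^2 /\ sqdist i k = eps^2 /\ seteq T (tri i j k).

Lemma has_vertices_of_triangle eps T : is_triangle eps T -> exists i j k, has_vertices eps T i j k.
Proof.
  intros (i & j & k & Li & Lj & Lk & Dij & Djk & Dik & HT).
  exists i, j, k.
  refine (conj Li (conj Lj (conj Lk (conj _ (conj _ (conj _ HT)))))); now apply sqdist_of_dist2.
Qed.

Lemma has_vertices_in eps T i j k : has_vertices eps T i j k -> T i /\ T j /\ T k.
Proof. intros (_ & _ & _ & _ & _ & _ & HT). repeat split; apply HT, tri_of_vertex; auto. Qed.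

Definition common_edge (T X : pt2 -> Prop) (p q : pt2) : Prop :=
  seteq (fun x => T x /\ X x) (seg p q).

Lemma common_edge_sym T X p q : common_edge T X p q -> common_edge T X q p.
Proof. intros H x. rewrite (H x). split; apply seg_sym. Qed.

Lemma common_edge_ends T X p q : common_edge T X p q -> T p /\ X p /\ T q /\ X q.
Proof.
  intros H. destruct (proj2 (H p) (seg_start p q)), (proj2 (H q) (seg_end p q)). tauto.
Qed.

Section UnitTriangles.

Variable eps : R.
Hypothesis eps_pos : 0 < eps.

(* For [p = a i + b j + c k] one has
   [a |p-i|^2 + b |p-j|^2 + c |p-k|^2 = (ab + bc + ca) eps^2 <= eps^2 / 3],
   whereas a lattice point other than [i, j, k] makes the left-hand side at least [eps^2]. *)
Lemma lattice_mem_tri i j k p :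
  in_lattice eps i -> in_lattice eps j -> in_lattice eps k -> in_lattice eps p ->
  sqdist i j = eps^2 -> sqdist j k = eps^2 -> sqdist i k = eps^2 ->
  tri i j k p -> p = i \/ p = j \/ p = k.
Proof.
  intros Li Lj Lk Lp Dij Djk Dik Hp.
  apply NNPP. intros Hnot. apply not_or_and in Hnot as [Hi Hnot].
  apply not_or_and in Hnot as [Hj Hk].
  pose proof (sqdist_lattice_ge eps p i Lp Li Hi) as Gi.
  pose proof (sqdist_lattice_ge eps p j Lp Lj Hj) as Gj.
  pose proof (sqdist_lattice_ge eps p k Lp Lk Hk) as Gk.
  destruct Hp as (a & b & c & Ha & Hb & Hc & Habc & Ep).
  assert (Id : a * sqdist p i + b * sqdist p j + c * sqdist p k
               = a * b * sqdist i j + b * c * sqdist j k + a * c * sqdist i k).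
  { subst p. unfold sqdist. simpl. replace c with (1 - a - b) by lra. ring. }
  rewrite Dij, Djk, Dik in Id.
  assert (a * eps^2 <= a * sqdist p i) by (apply Rmult_le_compat_l; auto).
  assert (b * eps^2 <= b * sqdist p j) by (apply Rmult_le_compat_l; auto).
  assert (c * eps^2 <= c * sqdist p k) by (apply Rmult_le_compat_l; auto).
  assert (3 * (a * b + b * c + a * c) <= 1).
  { replace 1 with ((a + b + c)^2) by (rewrite Habc; ring).
    pose proof (pow2_ge_0 (a - b)); pose proof (pow2_ge_0 (b - c)); pose proof (pow2_ge_0 (a - c)).
    nra. }
  nra.
Qed.

Lemma has_vertices_mem T i j k p : has_vertices eps T i j k -> in_lattice eps p -> T p ->
  p = i \/ p = j \/ p = k.
Proof.
  intros (Li & Lj & Lk & Dij & Djk & Dik & HT) Lp Tp. apply HT in Tp.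
  eapply lattice_mem_tri; eauto.
Qed.

Lemma has_vertices_neq T i j k : has_vertices eps T i j k -> i <> j /\ j <> k /\ i <> k.
Proof.
  intros (_ & _ & _ & Dij & Djk & Dik & _).
  assert (0 < eps^2) by nra.
  repeat split; intros ->; rewrite ?Dij, ?Djk, ?Dik in *; unfold sqdist in *; lra.
Qed.

Lemma has_vertices_sqdist T i j k x y : has_vertices eps T i j k ->
  (x = i \/ x = j \/ x = k) -> (y = i \/ y = j \/ y = k) -> x <> y -> sqdist x y = eps^2.
Proof.
  intros (_ & _ & _ & Dij & Djk & Dik & _) Hx Hy Hxy.
  destruct Hx as [->|[->| ->]], Hy as [->|[->| ->]]; try congruence;
    rewrite ?(sqdist_sym j i), ?(sqdist_sym k j), ?(sqdist_sym k i); assumption.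
Qed.

Lemma has_vertices_reorder T i j k p q r : has_vertices eps T i j k ->
  in_lattice eps p -> in_lattice eps q -> in_lattice eps r -> T p -> T q -> T r ->
  p <> q -> q <> r -> p <> r -> has_vertices eps T p q r.
Proof.
  intros Hv Lp Lq Lr Tp Tq Tr Dpq Dqr Dpr.
  pose proof (has_vertices_mem T i j k p Hv Lp Tp) as Mp.
  pose proof (has_vertices_mem T i j k q Hv Lq Tq) as Mq.
  pose proof (has_vertices_mem T i j k r Hv Lr Tr) as Mr.
  destruct (triple_perm i j k p q r Dpq Dqr Dpr Mp Mq Mr) as (Mi & Mj & Mk).
  refine (conj Lp (conj Lq (conj Lr (conj _ (conj _ (conj _ _))))));
    try (eapply has_vertices_sqdist; eassumption).
  destruct Hv as (_ & _ & _ & _ & _ & _ & HT).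
  intros x. rewrite (HT x). split; apply tri_sub; assumption.
Qed.

Lemma has_vertices_edge T i j k p q : has_vertices eps T i j k ->
  in_lattice eps p -> in_lattice eps q -> T p -> T q -> p <> q ->
  exists r, has_vertices eps T p q r.
Proof.
  intros Hv Lp Lq Tp Tq Dpq.
  pose proof (has_vertices_mem T i j k p Hv Lp Tp) as Mp.
  pose proof (has_vertices_mem T i j k q Hv Lq Tq) as Mq.
  destruct (has_vertices_neq T i j k Hv) as (Dij & Djk & Dik).
  assert (Hr : exists r, (r = i \/ r = j \/ r = k) /\ p <> r /\ q <> r).
  { destruct Mp as [->|[->| ->]], Mq as [->|[->| ->]]; try congruence;
      first [ exists i; split; [tauto | split; congruence]
            | exists j; split; [tauto | split; congruence]
            | exists k; split; [tauto | split; congruence] ]. }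
  destruct Hr as (r & Mr & Dpr & Dqr). exists r.
  destruct (has_vertices_in eps T i j k Hv) as (Ti & Tj & Tk).
  pose proof Hv as (Li & Lj & Lk & _).
  apply (has_vertices_reorder T i j k); auto; destruct Mr as [->|[->| ->]]; assumption.
Qed.

(* The third vertices of [T], [X], [Y] are apexes over the edge [pq]; there are at most two,
   and that of [X] (or [Y]) cannot be the one of [T] since [T] and [X] only share the edge. *)
Lemma common_edge_unique T X Y p q : common_edge T X p q -> common_edge T Y p q ->
  is_triangle eps T -> is_triangle eps X -> is_triangle eps Y ->
  in_lattice eps p -> in_lattice eps q -> p <> q -> X = Y.
Proof.
  intros EX EY HT HX HY Lp Lq Npq.
  destruct (common_edge_ends T X p q EX) as (Tp & Xp & Tq & Xq).
  destruct (common_edge_ends T Y p q EY) as (_ & Yp & _ & Yq).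
  assert (Apex : forall Z, is_triangle eps Z -> Z p -> Z q ->
            exists r, has_vertices eps Z p q r).
  { intros Z HZ Zp Zq. destruct (has_vertices_of_triangle eps Z HZ) as (i & j & k & Hv).
    eapply has_vertices_edge; eauto. }
  destruct (Apex T HT Tp Tq) as (t & Ht).
  destruct (Apex X HX Xp Xq) as (x & Hx).
  destruct (Apex Y HY Yp Yq) as (y & Hy).
  destruct Ht as (_ & _ & _ & Dpq & Dqt & Dpt & ST).
  destruct Hx as (_ & _ & _ & _ & Dqx & Dpx & SX).
  destruct Hy as (_ & _ & _ & _ & Dqy & Dpy & SY).
  assert (He2 : 0 < eps^2) by nra.
  assert (NotOnEdge : forall Z, seteq Z (tri p q t) -> common_edge T Z p q -> False).
  { intros Z SZ EZ. apply (seg_apex_absurd (eps^2) p q t); auto.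
    apply EZ. split; apply ST || apply SZ; apply tri_of_vertex; auto. }
  destruct (apexes_at_most_two (eps^2) p q t x y) as [<-|[<-|<-]]; auto.
  - exfalso. apply (NotOnEdge X); auto.
  - exfalso. apply (NotOnEdge Y); auto.
  - apply functional_extensionality. intros z.
    apply propositional_extensionality. rewrite (SX z), (SY z). reflexivity.
Qed.

End UnitTriangles.

Lemma opp3_involutive v : opp3 (opp3 v) = v.
Proof. destruct v as [[x y] z]. simpl. f_equal; [f_equal|]; ring. Qed.

Lemma opp3_swap v w : v = opp3 w -> w = opp3 v.
Proof. intros ->. now rewrite opp3_involutive. Qed.

Lemma opp3_inj v w : opp3 v = opp3 w -> v = w.
Proof. intros E. rewrite <- (opp3_involutive v), E. apply opp3_involutive. Qed.

Lemma sphere_neq_opp3 v : on_sphere v -> v <> opp3 v.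
Proof. destruct v as [[x y] z]. simpl. intros H E. injection E. nra. Qed.

Lemma neighbours_sym eps u T X : neighbours eps u T X -> neighbours eps u X T.
Proof.
  intros (HT & HX & x & y & A & E). split; [exact HX | split; [exact HT |]].
  exists x, y. split; [exact A |]. intros z. rewrite <- (E z). tauto.
Qed.

Section Neighbours.

Variables (eps : R) (u : pt2 -> pt3).
Hypothesis eps_pos : 0 < eps.
Hypothesis u_sphere : forall p, in_lattice eps p -> on_sphere (u p).

Lemma neighbours_side T X i j k : has_vertices eps T i j k -> neighbours eps u T X ->
  (common_edge T X i j /\ u i = opp3 (u j)) \/ (common_edge T X j k /\ u j = opp3 (u k)) \/
  (common_edge T X i k /\ u i = opp3 (u k)).
Proof.
  intros Hv (_ & _ & x & y & (Lx & Ly & Dxy & Axy) & Exy).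
  destruct (common_edge_ends T X x y Exy) as (Tx & _ & Ty & _).
  pose proof (has_vertices_mem eps eps_pos T i j k x Hv Lx Tx) as Mx.
  pose proof (has_vertices_mem eps eps_pos T i j k y Hv Ly Ty) as My.
  apply sqdist_of_dist2 in Dxy.
  assert (Nxy : x <> y) by (intros ->; unfold sqdist in Dxy; nra).
  pose proof (common_edge_sym T X x y Exy) as Eyx.
  pose proof (opp3_swap _ _ Axy) as Ayx.
  destruct Mx as [->|[->| ->]], My as [->|[->| ->]]; tauto.
Qed.

Lemma neighbours_at_most_two T X Y Z :
  neighbours eps u T X -> neighbours eps u T Y -> neighbours eps u T Z ->
  X = Y \/ X = Z \/ Y = Z.
Proof.
  intros NX NY NZ.
  pose proof NX as (HT & HX & _). pose proof NY as (_ & HY & _). pose proof NZ as (_ & HZ & _).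
  destruct (has_vertices_of_triangle eps T HT) as (i & j & k & Hv).
  pose proof Hv as (Li & Lj & Lk & _).
  destruct (has_vertices_neq eps eps_pos T i j k Hv) as (Dij & Djk & Dik).
  assert (NoCycle : ~ (u i = opp3 (u j) /\ u j = opp3 (u k) /\ u i = opp3 (u k))).
  { intros (Aij & Ajk & Aik). apply (sphere_neq_opp3 (u j) (u_sphere j Lj)).
    assert (Ejk : u j = u k) by (apply opp3_inj; congruence).
    rewrite Ejk at 2. exact Ajk. }
  destruct (neighbours_side T X i j k Hv NX) as [[EX AX]|[[EX AX]|[EX AX]]],
           (neighbours_side T Y i j k Hv NY) as [[EY AY]|[[EY AY]|[EY AY]]],
           (neighbours_side T Z i j k Hv NZ) as [[EZ AZ]|[[EZ AZ]|[EZ AZ]]];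
  first [ left; eapply (common_edge_unique eps eps_pos T); eassumption
        | right; left; eapply (common_edge_unique eps eps_pos T); eassumption
        | right; right; eapply (common_edge_unique eps eps_pos T); eassumption
        | exfalso; apply NoCycle; tauto ].
Qed.

(* The only antipodal side of such a triangle is [pq], so every neighbour is glued along it. *)
Lemma triangle_is_leaf T p q r : has_vertices eps T p q r ->
  u q = opp3 (u p) -> u r <> u p -> u r <> u q -> leaf (pt2 -> Prop) (neighbours eps u) T.
Proof.
  intros Hv Apq Drp Drq X Y NX NY.
  pose proof Hv as (Lp & Lq & _).
  destruct (has_vertices_neq eps eps_pos T p q r Hv) as (Dpq & _).
  assert (Side : forall W, neighbours eps u T W -> common_edge T W p q).
  { intros W NW.
    destruct (neighbours_side T W p q r Hv NW) as [[E _]|[[_ A]|[_ A]]]; [exact E | exfalso ..].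
    - apply Drp, opp3_inj. congruence.
    - apply Drq. rewrite Apq, A. apply eq_sym, opp3_involutive. }
  apply (common_edge_unique eps eps_pos T X Y p q); auto; [apply NX | apply NX | apply NY].
Qed.

Definition carries (a : pt3) (T : pt2 -> Prop) : Prop :=
  exists p q, in_lattice eps p /\ in_lattice eps q /\ T p /\ T q /\ u p = a /\ u q = opp3 a.

(* Two pairs of vertices of a triangle share a vertex, so the antipodal common edge shows [a], [-a]. *)
Lemma carries_neighbours a T X : carries a T -> neighbours eps u T X -> carries a X.
Proof.
  intros (p & q & Lp & Lq & Tp & Tq & Up & Uq) NX.
  pose proof NX as (HT & _ & x & y & (Lx & Ly & Dxy & Axy) & Exy).
  destruct (common_edge_ends T X x y Exy) as (Tx & Xx & Ty & Xy).
  destruct (has_vertices_of_triangle eps T HT) as (i & j & k & Hv).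
  assert (Dpq : p <> q).
  { intros <-. apply (sphere_neq_opp3 (u p) (u_sphere p Lp)). congruence. }
  assert (Nxy : x <> y) by (intros ->; apply sqdist_of_dist2 in Dxy; unfold sqdist in Dxy; nra).
  pose proof (opp3_swap _ _ Axy) as Ayx. pose proof (opp3_involutive a).
  assert (Meet : x = p \/ x = q \/ y = p \/ y = q).
  { apply (two_pairs_of_three_meet p q x y i j k); auto; eapply has_vertices_mem; eassumption. }
  destruct Meet as [E|[E|[E|E]]];
    first [ exists x, y; refine (conj Lx (conj Ly (conj Xx (conj Xy (conj _ _))))); congruence
          | exists y, x; refine (conj Ly (conj Lx (conj Xy (conj Xx (conj _ _))))); congruence ].
Qed.

Lemma carries_connected a T X : clos_refl_trans _ (neighbours eps u) T X ->
  carries a T -> carries a X.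
Proof. induction 1; eauto using carries_neighbours. Qed.

Lemma carries_has_vertices a T r : carries a T -> is_triangle eps T ->
  in_lattice eps r -> T r -> u r <> a -> u r <> opp3 a ->
  exists p q, has_vertices eps T p q r /\ u p = a /\ u q = opp3 a.
Proof.
  intros (p & q & Lp & Lq & Tp & Tq & Up & Uq) HT Lr Tr Dra Drb.
  destruct (has_vertices_of_triangle eps T HT) as (i & j & k & Hv).
  exists p, q. split; [|auto].
  apply (has_vertices_reorder eps eps_pos T i j k); auto; try congruence.
  intros <-. apply (sphere_neq_opp3 (u p) (u_sphere p Lp)). congruence.
Qed.

Lemma carries_extra_value a T r : carries a T -> is_triangle eps T ->
  in_lattice eps r -> T r -> u r <> a -> u r <> opp3 a ->
  leaf _ (neighbours eps u) T /\
  forall z, in_lattice eps z -> T z -> u z = a \/ u z = opp3 a \/ u z = u r.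
Proof.
  intros Ca HT Lr Tr Dra Drb.
  destruct (carries_has_vertices a T r Ca HT Lr Tr Dra Drb) as (p & q & Hv & Up & Uq).
  split.
  - apply (triangle_is_leaf T p q r); congruence.
  - intros z Lz Tz.
    destruct (has_vertices_mem eps eps_pos T p q r z Hv Lz Tz) as [->|[->| ->]]; auto.
Qed.

Section ConnectedFamily.

Variable F : (pt2 -> Prop) -> Prop.
Hypothesis F_triangles : forall T, F T -> is_triangle eps T.
Hypothesis F_connected : forall T1 T2, F T1 -> F T2 -> tri_connected eps u T1 T2.

(* Three values other than [a] and [-a] would sit on three distinct leaves of one component of
   a graph of degree at most two. *)
Lemma carrying_family_values a : (forall T, F T -> carries a T) ->
  exists b1 b2, forall T p, F T -> in_lattice eps p -> T p ->
    u p = a \/ u p = opp3 a \/ u p = b1 \/ u p = b2.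
Proof.
  intros Fa.
  set (P b := exists T p, F T /\ in_lattice eps p /\ T p /\ u p = b /\ b <> a /\ b <> opp3 a).
  destruct (cover_by_two a P) as (b1 & b2 & Hb).
  - intros b1 b2 b3 (T1 & p1 & F1 & L1 & T1p & U1 & D1a & D1b)
      (T2 & p2 & F2 & L2 & T2p & U2 & D2a & D2b) (T3 & p3 & F3 & L3 & T3p & U3 & D3a & D3b).
    apply NNPP. intros Hdist.
    subst b1 b2 b3.
    destruct (carries_extra_value a T1 p1 (Fa T1 F1) (F_triangles T1 F1))
      as [Leaf1 Vals1]; auto.
    destruct (carries_extra_value a T2 p2 (Fa T2 F2) (F_triangles T2 F2))
      as [Leaf2 Vals2]; auto.
    destruct (carries_extra_value a T3 p3 (Fa T3 F3) (F_triangles T3 F3))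
      as [Leaf3 Vals3]; auto.
    apply (no_three_connected_leaves _ _ (neighbours_sym eps u) neighbours_at_most_two T1 T2 T3);
      [auto .. | now apply F_connected | now apply F_connected].
    + intros <-. destruct (Vals1 p2) as [|[|]]; auto; apply Hdist; auto.
    + intros <-. destruct (Vals1 p3) as [|[|]]; auto; apply Hdist; auto.
    + intros <-. destruct (Vals2 p3) as [|[|]]; auto; apply Hdist; auto.
  - exists b1, b2. intros T p FT Lp Tp.
    destruct (classic (u p = a)) as [|Da]; [auto|].
    destruct (classic (u p = opp3 a)) as [|Db]; [auto|].
    right; right. apply Hb. exists T, p. tauto.
Qed.

Lemma connected_family_values : exists v1 v2 v3 v4, forall T p, F T -> in_lattice eps p -> T p ->
  u p = v1 \/ u p = v2 \/ u p = v3 \/ u p = v4.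
Proof.
  destruct (classic (exists T0, F T0)) as [[T0 F0]|Empty].
  2:{ exists north, north, north, north. intros T p FT. exfalso. eauto. }
  destruct (classic (exists X0, neighbours eps u T0 X0)) as [[X0 N0]|Isolated].
  - pose proof N0 as (_ & _ & p & q & (Lp & Lq & _ & Apq) & Epq).
    destruct (common_edge_ends T0 X0 p q Epq) as (Tp & _ & Tq & _).
    destruct (carrying_family_values (u q)) as (b1 & b2 & Hb).
    { intros T FT. apply (carries_connected (u q) T0 T (F_connected T0 T F0 FT)).
      exists q, p. tauto. }
    exists (u q), (opp3 (u q)), b1, b2. exact Hb.
  - assert (Single : forall T, F T -> T = T0).
    { intros T FT. pose proof (clos_rt_rt1n _ _ _ _ (F_connected T0 T F0 FT)) as C.
      destruct C as [|X T' NX _]; [reflexivity | exfalso; eauto]. }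
    destruct (has_vertices_of_triangle eps T0 (F_triangles T0 F0)) as (i & j & k & Hv).
    exists (u i), (u j), (u k), (u k). intros T p FT Lp Tp. rewrite (Single T FT) in Tp.
    destruct (has_vertices_mem eps eps_pos T0 i j k p Hv Lp Tp) as [->|[->| ->]]; auto.
Qed.

End ConnectedFamily.

End Neighbours.

Theorem lemma5p3 (eps : R) (Omega : pt2 -> Prop) (u : pt2 -> pt3) (Rg : pt2 -> Prop) :
  0 < eps -> open2 Omega -> bounded2 Omega -> SF eps Omega u ->
  admissible_region eps u Rg ->
  exists v1 v2 v3 v4 : pt3,
    forall p, in_lattice eps p -> Rg p ->
      u p = v1 \/ u p = v2 \/ u p = v3 \/ u p = v4.
Proof.
  intros eps_pos _ _ [u_sphere _] [[F [F_triangles [F_connected HRg]]] _].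
  destruct (connected_family_values eps u eps_pos u_sphere F F_triangles F_connected)
    as (v1 & v2 & v3 & v4 & Hv).
  exists v1, v2, v3, v4. intros p Lp Rp.
  destruct (proj1 (HRg p) Rp) as (T & FT & Tp). eauto.
Qed.
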